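(* Let $(N,h)$ be a Kähler manifold of complex dimension $n$ and $x_0\in N$. If $S_k(x_0)>0$, then the curvature is BC-$p$ positive at $x_0$ for every $p\ge k$. If $\mathrm{Ric}_k(x_0)$ is $\ell$-positive for some $\ell\le k$, then the curvature is BC-$p$ positive at $x_0$ for every $\ell\le p\le n$.
   Context: $R$ is the curvature tensor (sign convention: Fubini–Study positive), written $R_{v\bar v E\bar E}=R(v,\bar v,E,\bar E)$. The curvature is BC-$p$ positive at $x_0$ if for every unitary orthonormal set $\{E_1,\dots,E_p\}\subset T'_{x_0}N$ there exists $v\in T'_{x_0}N$ with $\sum_{i=1}^pR(v,\bar v,E_i,\bar E_i)>0$. For a $k$-dimensional complex subspace $\Sigma\subset T'_{x_0}N$ with unitary basis $E_1,\dots,E_k$: $S_k(x_0,\Sigma)=\sum_{i,j=1}^kR(E_i,\bar E_i,E_j,\bar E_j)$, and $S_k(x_0)>0$ means $S_k(x_0,\Sigma)>0$ for all such $\Sigma$; $\mathrm{Ric}_k(x_0,\Sigma)(v,\bar v)=\sum_{i=1}^kR(v,\bar v,E_i,\bar E_i)$ for $v\in\Sigma$, a Hermitian form on $\Sigma$. $\mathrm{Ric}_k(x_0)$ is $\ell$-positive if for every $k$-dimensional $\Sigma\subset T'_{x_0}N$ the sum of the $\ell$ smallest eigenvalues of the Hermitian form $\mathrm{Ric}_k(x_0,\Sigma)$ on $\Sigma$ is positive. *)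

(* Pointwise (linear-algebraic) setting at x0:
   T'_{x0}N is identified with C^n (row vectors 'rV[C]_n) via a unitary
   frame, so the Kähler metric h at x0 is the standard Hermitian product. *)
From HB Require Import structures.
From mathcomp Require Import all_boot all_order all_algebra.
Set Implicit Arguments. Unset Strict Implicit. Unset Printing Implicit Defensive.
Import Order.TTheory GRing.Theory Num.Theory.
Local Open Scope ring_scope.

Section Curv.
Variables (C : numClosedFieldType) (n : nat).

(* Components R_{i jbar k lbar} of the curvature tensor in the unitary frame. *)
Definition curv_tensor := 'I_n -> 'I_n -> 'I_n -> 'I_n -> C.

Definition curv (R : curv_tensor) (X Y Z W : 'rV[C]_n) : C :=
  \sum_(i < n) \sum_(j < n) \sum_(k < n) \sum_(l < n)
    R i j k l * X 0 i * (Y 0 j)^* * Z 0 k * (W 0 l)^*.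

Definition kahler_curvature (R : curv_tensor) : Prop :=
  (forall i j k l, R i j k l = R k j i l) /\
  (forall i j k l, (R i j k l)^* = R j i l k).

Definition unitary_frame p (F : 'M[C]_(p, n)) : Prop :=
  F *m (map_mx (@Num.conj_op C) F)^T = 1%:M.

Definition BC_pos (R : curv_tensor) (p : nat) : Prop :=
  forall F : 'M[C]_(p, n), unitary_frame F ->
    exists v : 'rV[C]_n, 0 < \sum_(i < p) curv R v v (row i F) (row i F).

(* S_k(x0, Sigma) for Sigma spanned by the unitary basis given by the rows of F. *)
Definition S_k (R : curv_tensor) k (F : 'M[C]_(k, n)) : C :=
  \sum_(i < k) \sum_(j < k) curv R (row i F) (row i F) (row j F) (row j F).

Definition S_pos (R : curv_tensor) (k : nat) : Prop :=
  forall F : 'M[C]_(k, n), unitary_frame F -> 0 < S_k R F.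

(* Matrix of the Hermitian form Ric_k(x0, Sigma) in the unitary basis (rows of F):
   entry (a,b) = Ric_k(E_a, Ebar_b). *)
Definition ric_mx (R : curv_tensor) k (F : 'M[C]_(k, n)) : 'M[C]_k :=
  \matrix_(a < k, b < k) \sum_(i < k) curv R (row a F) (row b F) (row i F) (row i F).

End Curv.

Definition eigvals (C : numClosedFieldType) k (M : 'M[C]_k) : seq C :=
  sval (closed_field_poly_normal (char_poly M)).

(* Sum of the l smallest eigenvalues (eigenvalues sorted by real part; for a
   Hermitian matrix they are all real). *)
Definition sum_smallest_eigs (C : numClosedFieldType) k (M : 'M[C]_k) (l : nat) : C :=
  let s := sort (fun x y : C => 'Re x <= 'Re y) (eigvals M) in
  \sum_(i < l) s`_i.

Definition ric_lpos (C : numClosedFieldType) n (R : curv_tensor C n) (k l : nat) : Prop :=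
  forall F : 'M[C]_(k, n), unitary_frame F -> 0 < sum_smallest_eigs (ric_mx R F) l.

(* A positive double sum over frame vectors, sum_i sum_j R(E_i, Ebar_i, F_j, Fbar_j) > 0,
   makes one of the E_i a witness for BC-p positivity at the frame (F_j).

   S_k > 0 implies S_(k+1) > 0.  For a unitary frame of a (k+1)-space, the sum
   of S_k over the k-subframes obtained by dropping one vector is
   (k-1) S_(k+1) + sum_a H(e_a), H the holomorphic sectional curvature.  For
   the standard frame this gives 0 < (k-1) S_(k+1) + sum_a H(e_a).  For the
   frames with entries w^(aj) z^(t f(a)) (w, z primitive roots of unity,
   f(a) = a + 2 m a^2 a Sidon-type encoding), averaging sum_j H(f_j) over t
   keeps only the index quadruples (a, b, c, d) with {b, d} = {a, c}, so the
   average is proportional to 2 S_(k+1) - sum_a H(e_a).  A positive combination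
   of these inequalities eliminates the H-terms and leaves a positive multiple
   of S_(k+1).

   If Ric_k is l-positive and l <= p <= k, extend a unitary p-frame to a
   unitary k-frame of some Sigma; by Ky Fan's inequality the trace of
   Ric_k(Sigma) over the p-frame is at least p/l times the sum of its l
   smallest eigenvalues, hence positive.  For p >= k, l-positivity of Ric_k
   gives S_k > 0 and the first part applies. *)

From HB Require Import structures.
From mathcomp Require Import all_boot all_order all_algebra.
From mathcomp Require Import sesquilinear spectral perm cyclic separable cyclotomic.
From mathcomp Require Import ring zify.
Set Implicit Arguments. Unset Strict Implicit. Unset Printing Implicit Defensive.
Import Order.TTheory GRing.Theory Num.Theory.
Local Open Scope ring_scope.

Local Notation quad n := ('I_n * ('I_n * ('I_n * 'I_n)))%type.

Lemma sum_quad (V : nmodType) n (F : 'I_n -> 'I_n -> 'I_n -> 'I_n -> V) :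
  \sum_i \sum_j \sum_k \sum_l F i j k l =
  \sum_(q : quad n) F q.1 q.2.1 q.2.2.1 q.2.2.2.
Proof.
transitivity (\sum_i \sum_j \sum_(p : 'I_n * 'I_n) F i j p.1 p.2).
  by apply: eq_bigr => i _; apply: eq_bigr => j _; rewrite pair_big.
transitivity (\sum_i \sum_(p : 'I_n * ('I_n * 'I_n)) F i p.1 p.2.1 p.2.2).
  by apply: eq_bigr => i _; rewrite (pair_big xpredT xpredT (fun j p => F i j p.1 p.2)).
by rewrite (pair_big xpredT xpredT (fun i p => F i p.1 p.2.1 p.2.2)).
Qed.

Lemma sum_delta (S : pzSemiRingType) (I : finType) (a : I) (F : I -> S) :
  \sum_b (b == a)%:R * F b = F a.
Proof.
by rewrite (bigD1 a) //= eqxx mul1r big1 ?addr0 // => b /negbTE->; rewrite mul0r.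
Qed.

Section CurvatureForm.
Variables (C : numClosedFieldType) (n : nat) (R : curv_tensor C n).

Lemma curv_delta a b c d :
  curv R (delta_mx 0 a) (delta_mx 0 b) (delta_mx 0 c) (delta_mx 0 d) = R a b c d.
Proof.
transitivity (\sum_i (i == a)%:R * \sum_j (j == b)%:R *
  \sum_k (k == c)%:R * \sum_l (l == d)%:R * R i j k l); last by rewrite !sum_delta.
apply: eq_bigr => i _; rewrite mulr_sumr; apply: eq_bigr => j _.
rewrite !mulr_sumr; apply: eq_bigr => k _; rewrite !mulr_sumr; apply: eq_bigr => l _.
by rewrite !mxE !conjC_nat /=; ring.
Qed.

Lemma curvZ s X Y Z W :
  curv R (s *: X) (s *: Y) (s *: Z) (s *: W) = (s * s^*) ^+ 2 * curv R X Y Z W.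
Proof.
rewrite /curv !sum_quad mulr_sumr; apply: eq_bigr => q _.
by rewrite !mxE !rmorphM /=; ring.
Qed.

Hypothesis hR : kahler_curvature R.

Lemma curv_sym13 X Y Z W : curv R X Y Z W = curv R Z Y X W.
Proof.
rewrite /curv !sum_quad (reindex_inj (h := fun q : quad n => (q.2.2.1, (q.2.1, (q.1, q.2.2.2))))).
  by apply: eq_bigr => -[a [b [c d]]] _ /=; rewrite (proj1 hR); ring.
by move=> [a [b [c d]]] [a' [b' [c' d']]] [-> -> -> ->].
Qed.

Lemma conjC_curv X Y Z W : (curv R X Y Z W)^* = curv R Y X W Z.
Proof.
rewrite /curv !sum_quad rmorph_sum.
rewrite (reindex_inj (h := fun q : quad n => (q.2.1, (q.1, (q.2.2.2, q.2.2.1))))).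
  apply: eq_bigr => -[a [b [c d]]] _ /=.
  by rewrite !rmorphM /= (proj2 hR) !conjCK; ring.
by move=> [a [b [c d]]] [a' [b' [c' d']]] [-> -> -> ->].
Qed.

Lemma curv_sym24 X Y Z W : curv R X Y Z W = curv R X W Z Y.
Proof. by rewrite -[LHS]conjCK conjC_curv curv_sym13 conjC_curv. Qed.

Lemma curv_real X Z : curv R X X Z Z \is Num.real.
Proof. by apply/CrealP; rewrite conjC_curv. Qed.

Section Linearity.
Variables (m : nat) (G : 'M[C]_(m, n)).

Lemma curv_mulmx1 x Y Z W :
  curv R (x *m G) Y Z W = \sum_a x 0 a * curv R (row a G) Y Z W.
Proof.
under [RHS]eq_bigr do rewrite /curv sum_quad big_distrr.
rewrite /curv sum_quad exchange_big; apply: eq_bigr => q _ /=.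
rewrite mxE mulr_sumr !mulr_suml; apply: eq_bigr => a _; rewrite !mxE; ring.
Qed.

Lemma curv_mulmx2 X y Z W :
  curv R X (y *m G) Z W = \sum_a (y 0 a)^* * curv R X (row a G) Z W.
Proof.
rewrite -[LHS]conjCK conjC_curv curv_mulmx1 rmorph_sum.
by apply: eq_bigr => a _; rewrite rmorphM /= conjC_curv.
Qed.

Lemma curv_mulmx3 X Y z W :
  curv R X Y (z *m G) W = \sum_a z 0 a * curv R X Y (row a G) W.
Proof.
by rewrite curv_sym13 curv_mulmx1; apply: eq_bigr => a _; rewrite curv_sym13.
Qed.

Lemma curv_mulmx4 X Y Z w :
  curv R X Y Z (w *m G) = \sum_a (w 0 a)^* * curv R X Y Z (row a G).
Proof.
by rewrite curv_sym24 curv_mulmx2; apply: eq_bigr => a _; rewrite curv_sym24.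
Qed.

Definition pullback : curv_tensor C m :=
  fun a b c d => curv R (row a G) (row b G) (row c G) (row d G).

Lemma curv_pullback x y z w :
  curv R (x *m G) (y *m G) (z *m G) (w *m G) = curv pullback x y z w.
Proof.
rewrite curv_mulmx1; apply: eq_bigr => a _; rewrite curv_mulmx2 mulr_sumr.
apply: eq_bigr => b _; rewrite curv_mulmx3 !mulr_sumr.
apply: eq_bigr => c _; rewrite curv_mulmx4 !mulr_sumr.
by apply: eq_bigr => d _; rewrite /pullback; ring.
Qed.

Lemma kahler_pullback : kahler_curvature pullback.
Proof. by split=> a b c d; [exact: curv_sym13 | exact: conjC_curv]. Qed.

Lemma S_k_pullback k (X : 'M[C]_(k, m)) : S_k R (X *m G) = S_k pullback X.
Proof.
by apply: eq_bigr => i _; apply: eq_bigr => j _; rewrite !row_mul curv_pullback.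
Qed.

End Linearity.
End CurvatureForm.

Section RootsOfUnity.
Variable C : numClosedFieldType.

Lemma prim_root_exists N : (0 < N)%N -> {z : C | N.-primitive_root z}.
Proof.
move=> N_gt0; apply/sigW.
have [r Dp] := closed_field_poly_normal ('X^N - 1 : {poly C}).
rewrite (monicP (monicXnsubC 1 N_gt0)) scale1r in Dp.
have r_roots : all N.-unity_root r.
  by apply/allP => z; rewrite -root_prod_XsubC -Dp.
have r_uniq : uniq r.
  by rewrite -separable_prod_XsubC -Dp separable_Xn_sub_1 // pnatr_eq0 -lt0n.
have r_size : (N <= size r)%N.
  by rewrite -ltnS -(size_prod_XsubC r id) -Dp size_XnsubC.
by have /hasP[z _ prim_z] := has_prim_root N_gt0 r_roots r_uniq r_size; exists z.
Qed.

Lemma mul_conjC_prim_root N (z : C) : N.-primitive_root z -> z * z^* = 1.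
Proof.
move=> prim_z; have N_gt0 := prim_order_gt0 prim_z.
have : `|z| ^+ N == 1 by rewrite -normrX prim_expr_order // normr1.
by rewrite pexpr_eq1 // => /eqP z1; rewrite -normCK z1 expr1n.
Qed.

Lemma mul_conjC_exprn (u : C) t : u * u^* = 1 -> u ^+ t * (u ^+ t)^* = 1.
Proof. by move=> u1; rewrite rmorphXn /= -exprMn u1 expr1n. Qed.

Lemma sum_prim_root_char N (z : C) i j : N.-primitive_root z ->
  (i < N)%N -> (j < N)%N ->
  \sum_(t < N) (z ^+ i * (z ^+ j)^*) ^+ t = (i == j)%:R * N%:R.
Proof.
move=> prim_z ltiN ltjN; have z1 := mul_conjC_prim_root prim_z.
have [<-|neq_ij] := eqVneq i j.
  rewrite mul_conjC_exprn // mul1r.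
  by under eq_bigr do rewrite expr1n; rewrite sumr_const card_ord.
set u := _ * _; have uN : u ^+ N = 1.
  rewrite exprMn -rmorphXn /= -!exprM !(mulnC _ N) !exprM (prim_expr_order prim_z).
  by rewrite !expr1n rmorph1 mulr1.
have u_neq1 : u != 1.
  apply: contra neq_ij => /eqP uE; have : z ^+ i = z ^+ j.
    by rewrite -[z ^+ i]mulr1 -(mul_conjC_exprn j z1) mulrCA -/u uE mulr1.
  by move/eqP; rewrite (eq_prim_root_expr prim_z) !modn_small.
have /eqP := subrX1 u N; rewrite uN subrr eq_sym mulf_eq0 subr_eq0 (negbTE u_neq1) /=.
by move/eqP->; rewrite mul0r.
Qed.

End RootsOfUnity.

Lemma digit_inj K x y x' y' : (x < K)%N -> (x' < K)%N ->
  (x + K * y = x' + K * y')%N -> x = x'.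
Proof.
move=> ltxK ltx'K /(congr1 (modn^~ K)) /=.
by rewrite ![(_ + K * _)%N]addnC !(mulnC K) !modnMDl !modn_small.
Qed.

Definition sidon_code (m x : nat) : nat := x + 2 * m * (x * x).

Lemma sidon_code_add_lt m a c : (a < m)%N -> (c < m)%N ->
  (sidon_code m a + sidon_code m c < 2 * sidon_code m m)%N.
Proof.
rewrite /sidon_code => ltam ltcm.
have ltsq x : (x < m)%N -> (x * x < m * m)%N by move=> ltxm; apply: ltn_mul.
have := ltsq a ltam; have := ltsq c ltcm; nia.
Qed.

Lemma sidon_code_addP m a b c d : (a < m)%N -> (b < m)%N -> (c < m)%N -> (d < m)%N ->
  (sidon_code m a + sidon_code m c == sidon_code m b + sidon_code m d) =
  ((b == a) && (d == c)) || ((b == c) && (d == a)).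
Proof.
rewrite /sidon_code => ltam ltbm ltcm ltdm; apply/eqP/idP => [codeE|]; last first.
  by case/orP => /andP[/eqP-> /eqP->]; lia.
have sumE : (a + c = b + d)%N.
  by apply: (@digit_inj (2 * m) _ (a * a + c * c) _ (b * b + d * d)); lia.
have sqE : (a * a + c * c = b * b + d * d)%N by nia.
case: (eqVneq b a) => [eba | /eqP nba] /=.
  by apply/eqP; lia.
have [ltbc | ltcb | ebc] := ltngtP b c; [nia | nia | by apply/eqP; lia].
Qed.

Lemma sumr_gt0 (R : numDomainType) (I : finType) (i0 : I) (F : I -> R) :
  (forall i, 0 < F i) -> 0 < \sum_i F i.
Proof.
move=> F_gt0; rewrite (bigD1 i0) //= ltr_pwDl //.
by apply: sumr_ge0 => i _; apply: ltW.
Qed.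

Lemma sum_drop_one (V : comPzRingType) k (M : 'I_k.+1 -> 'I_k.+1 -> V) :
  \sum_(a0 < k.+1) \sum_(i < k) \sum_(j < k) M (lift a0 i) (lift a0 j)
    + 2%:R * \sum_a \sum_b M a b = k.+1%:R * \sum_a \sum_b M a b + \sum_a M a a.
Proof.
set All := \sum_a \sum_b M a b.
have dropE (a0 : 'I_k.+1) : \sum_(i < k) \sum_(j < k) M (lift a0 i) (lift a0 j) =
    All - \sum_b M a0 b - \sum_a M a a0 + M a0 a0.
  rewrite /All (bigD1_ord a0) //= (bigD1_ord a0 (F := fun a => M a a0)) //=.
  have -> : \sum_(i < k) \sum_b M (lift a0 i) b =
      \sum_(i < k) M (lift a0 i) a0 + \sum_(i < k) \sum_(j < k) M (lift a0 i) (lift a0 j).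
    by rewrite -big_split /=; apply: eq_bigr => i _; rewrite (bigD1_ord a0).
  by ring.
under eq_bigr do rewrite dropE.
rewrite big_split /= !sumrB sumr_const card_ord -/All.
rewrite (exchange_big _ _ _ _ _ (fun i a => M a i)) /= -/All.
by rewrite -mulr_natl; ring.
Qed.

Section Frames.
Variables (C : numClosedFieldType) (n : nat) (R : curv_tensor C n).
Local Open Scope sesquilinear_scope.

Lemma unitary_frameE p (F : 'M[C]_(p, n)) : unitary_frame F <-> F \is unitarymx.
Proof. by rewrite /unitary_frame map_trmx; split => /unitarymxP. Qed.

Lemma S_kZ k s (X : 'M[C]_(k, n)) : S_k R (s *: X) = (s * s^*) ^+ 2 * S_k R X.
Proof.
have rowZ l : row l (s *: X) = s *: row l X by apply/rowP => a; rewrite !mxE.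
rewrite /S_k mulr_sumr; apply: eq_bigr => i _; rewrite mulr_sumr; apply: eq_bigr => j _.
by rewrite !rowZ curvZ.
Qed.

Lemma S_pos_tight k c (X : 'M[C]_(k, n)) :
  S_pos R k -> 0 < c -> X *m X^t* = c%:M -> 0 < S_k R X.
Proof.
move=> R_pos c_gt0 XX; set s := sqrtC c.
have s_gt0 : 0 < s by rewrite sqrtC_gt0.
have s_conj : s^* = s by apply/CrealP/gtr0_real.
have s2 : s * s = c by rewrite -expr2 sqrtCK.
have Xs : X = s *: (s^-1 *: X) by rewrite scalerA divff ?gt_eqF ?scale1r.
rewrite Xs S_kZ s_conj pmulr_rgt0 ?exprn_gt0 ?mulr_gt0 //; apply/R_pos/unitary_frameE/unitarymxP.
have -> : (s^-1 *: X)^t* = s^-1 *: X^t*.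
  by apply/matrixP => i j; rewrite !mxE rmorphM fmorphV /= s_conj.
rewrite -scalemxAl -scalemxAr XX scalerA -invfM s2 -[c%:M]scalemx1 scalerA.
by rewrite mulVf ?gt_eqF // scale1r.
Qed.

Hypothesis hR : kahler_curvature R.

Lemma sum_curv_tight p c (W : 'M[C]_(p, n)) Z Z' :
  W^t* *m W = c%:M ->
  \sum_j curv R (row j W) (row j W) Z Z' =
  c * \sum_a curv R (delta_mx 0 a) (delta_mx 0 a) Z Z'.
Proof.
move=> WW.
have rowE j : curv R (row j W) (row j W) Z Z' = \sum_a \sum_b
    W j a * (W j b)^* * curv R (delta_mx 0 a) (delta_mx 0 b) Z Z'.
  rewrite -[row j W]mulmx1 curv_mulmx1; apply: eq_bigr => a _.
  rewrite (curv_mulmx2 hR) mulr_sumr; apply: eq_bigr => b _.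
  by rewrite !row1 !mxE; ring.
under eq_bigr do rewrite rowE.
rewrite exchange_big mulr_sumr; apply: eq_bigr => a _ /=.
rewrite exchange_big /= -(sum_delta a (fun b => curv R (delta_mx 0 a) (delta_mx 0 b) Z Z')) mulr_sumr.
apply: eq_bigr => b _; rewrite -big_distrl /=.
have WWba : \sum_j W j a * (W j b)^* = (b == a)%:R * c.
  have := congr1 (fun M : 'M_n => M b a) WW; rewrite !mxE mulr_natl => <-.
  by apply: eq_bigr => j _; rewrite !mxE mulrC.
by rewrite WWba mulrCA mulrA.
Qed.
End Frames.

Section Averaging.
Variables (C : numClosedFieldType) (k : nat) (Q : curv_tensor C k.+1).
Hypotheses (hQ : kahler_curvature Q) (k_gt0 : (0 < k)%N) (Q_pos : S_pos Q k).
Local Notation m := k.+1.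
Local Open Scope sesquilinear_scope.

Local Notation S := (\sum_a \sum_b Q a a b b).
Local Notation H := (\sum_a Q a a a a).

Definition bisec (W : 'M[C]_m) j j' :=
  curv Q (row j W) (row j W) (row j' W) (row j' W).

Lemma sum_bisec_tight c (W : 'M[C]_m) :
  W^t* *m W = c%:M -> \sum_j \sum_j' bisec W j j' = c ^+ 2 * S.
Proof.
move=> WW; have swap X Y : curv Q X X Y Y = curv Q Y Y X X.
  by rewrite (curv_sym13 hQ) (curv_sym24 hQ).
rewrite /bisec exchange_big /=.
under eq_bigr do rewrite (sum_curv_tight hQ _ _ WW).
rewrite -mulr_sumr exchange_big /= expr2 -mulrA; congr (_ * _).
under eq_bigr => a _ do under eq_bigr => j _ do rewrite swap.
under eq_bigr do rewrite (sum_curv_tight hQ _ _ WW).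
rewrite -mulr_sumr exchange_big /=; congr (_ * _).
by apply: eq_bigr => a _; apply: eq_bigr => b _; rewrite curv_delta.
Qed.

Lemma sum_drop_one_bisec_gt0 c (W : 'M[C]_m) : 0 < c -> W *m W^t* = c%:M ->
  0 < \sum_(j0 < m) \sum_(i < k) \sum_(i' < k) bisec W (lift j0 i) (lift j0 i').
Proof.
move=> c_gt0 WW; apply: (sumr_gt0 ord0) => j0.
have -> : \sum_(i < k) \sum_(i' < k) bisec W (lift j0 i) (lift j0 i') =
    S_k Q (rowsub (lift j0) W).
  by apply: eq_bigr => i _; apply: eq_bigr => i' _; rewrite /bisec !row_rowsub.
apply: (S_pos_tight Q_pos c_gt0); apply/matrixP => i i'.
have := congr1 (fun M : 'M_m => M (lift j0 i) (lift j0 i')) WW.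
rewrite !mxE (inj_eq (@lift_inj _ j0)) => <-.
by apply: eq_bigr => a _; rewrite !mxE.
Qed.

Lemma tight_frame_bisec_gt0 c (W : 'M[C]_m) : 0 < c ->
  W *m W^t* = c%:M -> W^t* *m W = c%:M ->
  0 < (m%:R - 2%:R) * (c ^+ 2 * S) + \sum_j bisec W j j.
Proof.
move=> c_gt0 WWt WtW; rewrite -(sum_bisec_tight WtW).
suff -> : (m%:R - 2%:R) * (\sum_j \sum_j' bisec W j j') + \sum_j bisec W j j =
    \sum_(j0 < m) \sum_(i < k) \sum_(i' < k) bisec W (lift j0 i) (lift j0 i').
  exact: sum_drop_one_bisec_gt0 c_gt0 WWt.
by apply: (addIr (2%:R * \sum_j \sum_j' bisec W j j')); rewrite sum_drop_one; ring.
Qed.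

Lemma sum_same_pair :
  \sum_(q : quad m) ((q.2.1 == q.1) && (q.2.2.2 == q.2.2.1) ||
                     (q.2.1 == q.2.2.1) && (q.2.2.2 == q.1))%:R * Q q.1 q.2.1 q.2.2.1 q.2.2.2
  = 2%:R * S - H.
Proof.
rewrite -(sum_quad (fun a b c d => ((b == a) && (d == c) || (b == c) && (d == a))%:R * Q a b c d)).
have pairE a c : \sum_b \sum_d ((b == a) && (d == c) || (b == c) && (d == a))%:R * Q a b c d =
    Q a a c c + Q a c c a - (a == c)%:R * Q a a c a.
  have sum2 x y (F : 'I_m -> 'I_m -> C) :
      \sum_b \sum_d (b == x)%:R * (d == y)%:R * F b d = F x y.
    have -> : \sum_b \sum_d (b == x)%:R * (d == y)%:R * F b d =
        \sum_b (b == x)%:R * \sum_d (d == y)%:R * F b d.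
      by apply: eq_bigr => b _; rewrite mulr_sumr; apply: eq_bigr => d _; rewrite mulrA.
    by rewrite !sum_delta.
  transitivity (\sum_b \sum_d ((b == a)%:R * (d == c)%:R * Q a b c d
      + (b == c)%:R * (d == a)%:R * Q a b c d
      - (b == a)%:R * (d == a)%:R * ((a == c)%:R * Q a b c d))).
    apply: eq_bigr => b _; apply: eq_bigr => d _.
    have [<-|nac] := eqVneq a c.
      by rewrite orbb; case: (b == a); case: (d == a) => /=; ring.
    have [->|nba] := eqVneq b a; rewrite ?eqxx ?(negbTE nac) /=.
      by case: (d == c); case: (d == a) => /=; ring.
    by case: (b == c); case: (d == a) => /=; ring.
  under eq_bigr do rewrite sumrB big_split /=.
  by rewrite sumrB big_split /= !sum2.
under eq_bigr => a _ do rewrite exchange_big /=.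
under eq_bigr => a _ do under eq_bigr => c _ do rewrite pairE.
under eq_bigr => a _ do rewrite sumrB big_split /=.
rewrite sumrB big_split /= mulr2n mulrDl mul1r; congr (_ + _ - _).
- rewrite exchange_big; apply: eq_bigr => a _; apply: eq_bigr => c _.
  by rewrite (proj1 hQ).
- by apply: eq_bigr => a _; under eq_bigr do rewrite eq_sym; rewrite sum_delta.
Qed.

Section FourierFrames.
Variables (w z : C).
Local Notation code := (sidon_code m).
Local Notation N := (2 * code m)%N.
Hypotheses (w_prim : m.-primitive_root w) (z_prim : N.-primitive_root z).

Definition fourier_frame t : 'M[C]_m :=
  \matrix_(j < m, a < m) ((w ^+ a) ^+ j * (z ^+ code a) ^+ t).

Let z_code_conj t a : (z ^+ code a) ^+ t * ((z ^+ code a) ^+ t)^* = 1.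
Proof. exact/mul_conjC_exprn/mul_conjC_exprn/(mul_conjC_prim_root z_prim). Qed.

Lemma fourier_frame_rows t : fourier_frame t *m (fourier_frame t)^t* = m%:R%:M.
Proof.
apply/matrixP => j j'.
have -> : (m%:R%:M : 'M[C]_m) j j' = (j == j')%:R * m%:R by rewrite mxE mulrC mulr_natr.
rewrite mxE -(sum_prim_root_char w_prim (ltn_ord j) (ltn_ord j')).
apply: eq_bigr => a _; rewrite !mxE rmorphM /= !(exprAC w a) exprMn rmorphXn.
by rewrite mulrACA z_code_conj mulr1.
Qed.

Lemma fourier_frame_cols t : (fourier_frame t)^t* *m fourier_frame t = m%:R%:M.
Proof.
apply/matrixP => a b.
have -> : (m%:R%:M : 'M[C]_m) a b = (b == a)%:R * m%:R by rewrite mxE mulrC mulr_natr eq_sym.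
rewrite mxE; transitivity ((\sum_(j < m) (w ^+ b * (w ^+ a)^*) ^+ j) *
              ((z ^+ code b) ^+ t * ((z ^+ code a) ^+ t)^*)).
  rewrite big_distrl /=; apply: eq_bigr => j _; rewrite !mxE rmorphM /= exprMn rmorphXn.
  by rewrite mulrC mulrACA.
rewrite (sum_prim_root_char w_prim (ltn_ord b) (ltn_ord a)) val_eqE.
have [->|_] := eqVneq b a; last by rewrite !mul0r.
by rewrite z_code_conj mulr1.
Qed.

Lemma sum_fourier_bisec_diag :
  \sum_(t < N) \sum_j bisec (fourier_frame t) j j = (N * m)%:R * (2%:R * S - H).
Proof.
rewrite -sum_same_pair mulr_sumr.
pose u1 (q : quad m) := w ^+ q.1 * (w ^+ q.2.1)^* * w ^+ q.2.2.1 * (w ^+ q.2.2.2)^*.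
pose u2 (q : quad m) :=
  z ^+ code q.1 * (z ^+ code q.2.1)^* * z ^+ code q.2.2.1 * (z ^+ code q.2.2.2)^*.
have bisecE t j : bisec (fourier_frame t) j j =
    \sum_(q : quad m) Q q.1 q.2.1 q.2.2.1 q.2.2.2 * (u1 q ^+ j * u2 q ^+ t).
  rewrite /bisec /curv sum_quad; apply: eq_bigr => q _.
  by rewrite !mxE /u1 /u2 !exprMn !rmorphM !rmorphXn /=; ring.
under eq_bigr => t _ do under eq_bigr => j _ do rewrite bisecE.
under eq_bigr => t _ do rewrite exchange_big /=.
rewrite exchange_big /=; apply: congr_big => // q _.
transitivity (Q q.1 q.2.1 q.2.2.1 q.2.2.2 *
              ((\sum_(j < m) u1 q ^+ j) * \sum_(t < N) u2 q ^+ t)).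
  rewrite mulrA mulr_sumr; apply: eq_bigr => t _.
  by rewrite mulr_sumr big_distrl /=; apply: eq_bigr => j _; rewrite mulrA.
have ->: u2 q = z ^+ (code q.1 + code q.2.2.1) * (z ^+ (code q.2.1 + code q.2.2.2))^*.
  by rewrite /u2 (exprD z (code q.1)) (exprD z (code q.2.1)) rmorphM; ring.
rewrite (sum_prim_root_char z_prim) ?sidon_code_add_lt // sidon_code_addP // !val_eqE.
case: (boolP (_ || _)) => [same|_]; last by rewrite mulr0n !mul0r !mulr0.
have u1E : u1 q = 1.
  have wx x : w ^+ x * (w ^+ x)^* = 1 by apply/mul_conjC_exprn/(mul_conjC_prim_root w_prim).
  rewrite /u1; case/orP: same => /andP[/eqP-> /eqP->]; first by rewrite wx mul1r wx.
  by rewrite -mulrA [w ^+ q.2.2.1 * _]mulrC mulrACA wx mul1r mulrC wx.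
under eq_bigr do rewrite u1E expr1n.
by rewrite sumr_const card_ord natrM; ring.
Qed.

End FourierFrames.

Lemma S_succ_coord_gt0 : 0 < S.
Proof.
pose N := (2 * sidon_code m m)%N.
have N_gt0 : (0 < N)%N by rewrite /N /sidon_code; nia.
have [w w_prim] := prim_root_exists C (ltn0Sn k).
have [z z_prim] := prim_root_exists C N_gt0.
have coord : 0 < (m%:R - 2%:R) * S + H.
  have conj1 : (1%:M : 'M[C]_m)^t* = 1%:M by rewrite trmx1 map_mx1.
  have := tight_frame_bisec_gt0 (W := 1%:M) ltr01.
  rewrite conj1 mulmx1 expr1n mul1r => /(_ erefl erefl).
  have bisec1 j : bisec 1%:M j j = Q j j j j by rewrite /bisec row1 curv_delta.
  by rewrite (eq_bigr _ (fun j _ => bisec1 j)).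
have fourier : 0 < ((m%:R - 2%:R) * (m%:R ^+ 2 * S)) *+ N + (N * m)%:R * (2%:R * S - H).
  rewrite -(sum_fourier_bisec_diag w_prim z_prim) -[N in _ *+ N](card_ord N) -sumr_const.
  rewrite -big_split /=.
  apply: (sumr_gt0 (Ordinal N_gt0)) => t.
  apply: tight_frame_bisec_gt0 (ltr0Sn _ k) _ _.
    exact: fourier_frame_rows.
  exact: fourier_frame_cols.
have sumE : (N * m)%:R * ((m%:R - 2%:R) * S + H) +
    (((m%:R - 2%:R) * (m%:R ^+ 2 * S)) *+ N + (N * m)%:R * (2%:R * S - H)) =
    (N * m * m * k)%:R * S :> C.
  by rewrite -[_ *+ N]mulr_natr !natrM; ring.
have NM_gt0 : 0 < (N * m)%:R :> C by rewrite ltr0n; nia.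
have := addr_gt0 (mulr_gt0 NM_gt0 coord) fourier.
by rewrite sumE pmulr_rgt0 // ltr0n; nia.
Qed.

End Averaging.

Lemma weighted_sum_ge_prefix (F : numDomainType) k (x v : 'I_k -> F) l p (l0 : 'I_k) :
  l0.+1 = l -> (l <= p)%N -> {homo x : i j / (i <= j)%N >-> i <= j} ->
  (forall i, 0 <= v i <= 1) -> \sum_i v i = p%:R ->
  p%:R * \sum_(i < k | (i < l)%N) x i <= l%:R * \sum_i v i * x i.
Proof.
move=> l0E lelp x_sorted v01 sum_v.
pose e (i : 'I_k) : F := ((i < l)%N)%:R.
have sum_e : \sum_i e i = l%:R.
  have lelk : (l <= k)%N by rewrite -l0E.
  transitivity (\sum_(i < k | (i < l)%N) (1 : F)).
    by rewrite [RHS]big_mkcond; apply: eq_bigr => i _; rewrite /e; case: ltnP.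
  by rewrite -(big_ord_widen k (fun _ => 1 : F) lelk) sumr_const card_ord.
have sum_ex : \sum_(i < k | (i < l)%N) x i = \sum_i e i * x i.
  by rewrite big_mkcond; apply: eq_bigr => i _; rewrite /e; case: (i < l)%N; rewrite ?mul1r ?mul0r.
have term_ge0 i : 0 <= (l%:R * v i - p%:R * e i) * (x i - x l0).
  have /andP[v_ge0 v_le1] := v01 i; rewrite /e; case: ltnP => [ltil|leli] /=.
    apply: mulr_le0; last by rewrite subr_le0 x_sorted //; lia.
    rewrite mulr1 subr_le0 (le_trans _ (_ : l%:R <= p%:R)) ?ler_nat //.
    by rewrite -[leRHS]mulr1 ler_wpM2l.
  apply: mulr_ge0; first by rewrite mulr0 subr0 mulr_ge0.
  by rewrite subr_ge0 x_sorted //; lia.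
have : 0 <= \sum_i (l%:R * v i - p%:R * e i) * (x i - x l0).
  by apply: sumr_ge0 => i _; apply: term_ge0.
have -> : \sum_i (l%:R * v i - p%:R * e i) * (x i - x l0) =
   l%:R * \sum_i v i * x i - p%:R * \sum_i e i * x i
   - x l0 * (l%:R * \sum_i v i - p%:R * \sum_i e i).
  rewrite !mulr_sumr -!sumrB mulr_sumr -sumrB; apply: eq_bigr => i _; ring.
by rewrite sum_v sum_e [l%:R * p%:R]mulrC subrr mulr0 subr0 subr_ge0 sum_ex.
Qed.

Section KyFan.
Variable C : numClosedFieldType.
Local Open Scope sesquilinear_scope.

Lemma char_poly_conjmx k (P D : 'M[C]_k) : P \in unitmx ->
  char_poly (invmx P *m D *m P) = char_poly D.
Proof.
move=> P_unit; rewrite /char_poly /char_poly_mx.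
have -> : 'X%:M - map_mx polyC (invmx P *m D *m P) =
    map_mx polyC (invmx P) *m ('X%:M - map_mx polyC D) *m map_mx polyC P.
  rewrite mulmxBr mulmxBl -!map_mxM; congr (_ - _).
  by rewrite scalar_mxC -mulmxA -map_mxM mulVmx // map_mx1 mulmx1.
by rewrite !det_mulmx mulrC mulrA -det_mulmx -map_mxM mulmxV // map_mx1 det1 mul1r.
Qed.

Lemma eigvals_hermitian k (M : 'M[C]_k) : M \is hermsymmx ->
  perm_eq (eigvals M) [seq spectral_diag M 0 j | j <- enum 'I_k].
Proof.
move=> M_herm; have /orthomx_spectralP ME := hermitian_normalmx M_herm.
rewrite /eigvals; case: closed_field_poly_normal => s /= charE.
rewrite (monicP (char_poly_monic M)) scale1r in charE.
apply: prod_XsubC_eq; rewrite -charE [in char_poly M]ME char_poly_conjmx ?spectral_unit //.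
rewrite char_poly_trig ?diag_mx_is_trig // big_map big_enum /=.
by apply: eq_bigr => i _; rewrite mxE eqxx mulr1n.
Qed.

Lemma sum_smallest_eigs_sorted k (M : 'M[C]_k) l : M \is hermsymmx -> (l <= k)%N ->
  exists2 s : 'S_k,
    {homo (fun i => spectral_diag M 0 (s i)) : i j / (i <= j)%N >-> i <= j} &
    sum_smallest_eigs M l = \sum_(i < k | (i < l)%N) spectral_diag M 0 (s i).
Proof.
move=> M_herm lelk; set d := spectral_diag M.
have d_real j : d 0 j \is Num.real.
  by move/mxOverP: (hermitian_spectral_diag_real M_herm); apply.
set sorted_eigs := sort (fun x y : C => 'Re x <= 'Re y) (eigvals M).
have : perm_eq sorted_eigs (map_tuple (fun j => d 0 j) (ord_tuple k)).
  by rewrite perm_sort /= (eigvals_hermitian M_herm).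
case/tuple_permP => s sortedE; exists s.
  have nthE (i : 'I_k) : sorted_eigs`_i = d 0 (s i).
    by rewrite sortedE nth_mktuple tnth_map tnth_ord_tuple.
  move=> i j leij; rewrite -!nthE.
  have Re_sorted : sorted (fun x y : C => 'Re x <= 'Re y) sorted_eigs.
    by apply: sort_sorted => x y; apply: real_leVge; apply: Creal_Re.
  have Re_trans : transitive (fun x y : C => 'Re x <= 'Re y) by move=> y x z; apply: le_trans.
  have := sorted_leq_nth Re_trans (fun x => lexx ('Re x)) 0 Re_sorted.
  rewrite sortedE size_tuple => /(_ i j (ltn_ord i) (ltn_ord j) leij).
  by rewrite -sortedE !nthE (Creal_ReP _ (d_real _)) (Creal_ReP _ (d_real _)).
rewrite /sum_smallest_eigs -/sorted_eigs (big_ord_widen k (fun i => sorted_eigs`_i) lelk).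
by apply: eq_bigr => i _; rewrite sortedE nth_mktuple tnth_map tnth_ord_tuple.
Qed.

Section ColumnWeights.
Variables (p k : nat) (Z : 'M[C]_(p, k)).
Hypothesis Z_unitary : Z *m Z^t* = 1%:M.

Definition col_norm2 j := \sum_a Z a j * (Z a j)^*.

Lemma col_norm2_ge0 j : 0 <= col_norm2 j.
Proof. by apply: sumr_ge0 => a _; apply: mul_conjC_ge0. Qed.

Lemma sum_col_norm2 : \sum_j col_norm2 j = p%:R.
Proof.
rewrite exchange_big /= -[p in RHS]card_ord -sumr_const; apply: eq_bigr => a _.
have := congr1 (fun A : 'M_p => A a a) Z_unitary; rewrite !mxE eqxx mulr1n => <-.
by apply: eq_bigr => j _; rewrite !mxE.
Qed.

Lemma col_norm2_le1 j : col_norm2 j <= 1.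
Proof.
pose G := Z^t* *m Z.
have GG : G *m G = G by rewrite /G mulmxA -(mulmxA _ Z) Z_unitary mulmx1.
have Gjj : G j j = col_norm2 j.
  by rewrite /G mxE; apply: eq_bigr => a _; rewrite !mxE mulrC.
have G_herm b : G b j = (G j b)^*.
  rewrite /G !mxE rmorph_sum; apply: eq_bigr => a _.
  by rewrite !mxE rmorphM /= conjCK mulrC.
have w_real : (col_norm2 j)^* = col_norm2 j by apply/CrealP/ger0_real/col_norm2_ge0.
have sq_le : col_norm2 j * col_norm2 j <= col_norm2 j.
  rewrite -{3}Gjj -GG mxE (bigD1 j) //= G_herm Gjj w_real lerDl.
  by apply: sumr_ge0 => b _; rewrite G_herm; apply: mul_conjC_ge0.
have [->|w_neq0] := eqVneq (col_norm2 j) 0; first exact: ler01.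
have w_gt0 : 0 < col_norm2 j by rewrite lt_def w_neq0 col_norm2_ge0.
by rewrite -(ler_pM2l w_gt0) mulr1.
Qed.

End ColumnWeights.

Lemma trace_conj_diag p k (Y : 'M[C]_(p, k)) (P : 'M[C]_k) (d : 'rV[C]_k) :
  \sum_a (Y *m (P^t* *m diag_mx d *m P) *m Y^t*) a a =
  \sum_j col_norm2 (Y *m P^t*) j * d 0 j.
Proof.
have -> : Y *m (P^t* *m diag_mx d *m P) *m Y^t* = (Y *m P^t*) *m diag_mx d *m (Y *m P^t*)^t*.
  by rewrite trmx_mul map_mxM trmxCK !mulmxA.
under eq_bigr do rewrite mxE.
under [RHS]eq_bigr do rewrite big_distrl.
rewrite [RHS]exchange_big; apply: eq_bigr => a _; apply: eq_bigr => j _ /=.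
by rewrite mul_mx_diag !mxE; ring.
Qed.

Lemma sum_smallest_eigs_le_trace k (M : 'M[C]_k) p (Y : 'M[C]_(p, k)) l :
  M \is hermsymmx -> Y \is unitarymx -> (0 < l)%N -> (l <= p)%N ->
  p%:R * sum_smallest_eigs M l <= l%:R * \sum_(a < p) (Y *m M *m Y^t*) a a.
Proof.
move=> M_herm Y_unitary l_gt0 lelp.
have lepk : (p <= k)%N by rewrite -(mxrank_unitary Y_unitary) rank_leq_col.
have lelk : (l <= k)%N := leq_trans lelp lepk.
have /orthomx_spectralP ME := hermitian_normalmx M_herm.
rewrite invmx_unitary ?spectral_unitarymx // in ME.
have [s d_sorted ->] := sum_smallest_eigs_sorted M_herm lelk.
set P := spectralmx M in ME *; set d := spectral_diag M in ME d_sorted *.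
set Z := Y *m P^t*.
have Z_unitary : Z *m Z^t* = 1%:M.
  by apply/unitarymxP/mul_unitarymx; rewrite ?trmxC_unitary ?spectral_unitarymx.
rewrite {1}ME trace_conj_diag -/Z.
rewrite [X in _ <= _ * X](reindex_inj (@perm_inj _ s)) /=.
have l1_lt_k : (l.-1 < k)%N by rewrite prednK.
apply: (weighted_sum_ge_prefix (l0 := Ordinal l1_lt_k)) => //=.
- by rewrite prednK.
- by move=> i; rewrite col_norm2_ge0 // col_norm2_le1.
- by rewrite -(sum_col_norm2 Z_unitary) [RHS](reindex_inj (@perm_inj _ s)).
Qed.

End KyFan.

Lemma exists_gt0_of_sum_gt0 (F : numDomainType) (I : finType) (G : I -> F) :
  (forall i, G i \is Num.real) -> 0 < \sum_i G i -> exists i, 0 < G i.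
Proof.
move=> G_real sum_gt0; case: (boolP [exists i, 0 < G i]) => [/existsP //|].
rewrite negb_exists => /forallP G_le0.
have : \sum_i G i <= 0 by apply: sumr_le0 => i _; rewrite real_leNgt ?real0 ?G_le0.
by move=> /(lt_le_trans sum_gt0); rewrite ltxx.
Qed.

Section Positivity.
Variables (C : numClosedFieldType) (n : nat) (R : curv_tensor C n).
Hypothesis hR : kahler_curvature R.
Local Open Scope sesquilinear_scope.

Lemma BC_witness p (F : 'M[C]_(p, n)) q (G : 'M[C]_(q, n)) :
  0 < \sum_(i < q) \sum_(j < p) curv R (row i G) (row i G) (row j F) (row j F) ->
  exists v : 'rV[C]_n, 0 < \sum_(j < p) curv R v v (row j F) (row j F).
Proof.
case/exists_gt0_of_sum_gt0 => [i|i pos]; last by exists (row i G).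
by apply: rpred_sum => j _; apply: curv_real.
Qed.

Lemma S_pos_BC_pos p : S_pos R p -> BC_pos R p.
Proof. by move=> R_pos F F_frame; apply: (BC_witness (G := F)); apply: R_pos. Qed.

Lemma not_S_pos0 : ~ S_pos R 0.
Proof.
move=> R_pos; have frame0 : unitary_frame (0 : 'M[C]_(0, n)) by rewrite /unitary_frame !flatmx0.
by have := R_pos 0 frame0; rewrite /S_k big_ord0 ltxx.
Qed.

Lemma S_pos_succ k : (0 < k)%N -> S_pos R k -> S_pos R k.+1.
Proof.
move=> k_gt0 R_pos G G_frame.
have -> : S_k R G = S_k (pullback R G) 1%:M by rewrite -(S_k_pullback hR) mul1mx.
have -> : S_k (pullback R G) 1%:M = \sum_a \sum_b pullback R G a a b b.
  by apply: eq_bigr => a _; apply: eq_bigr => b _; rewrite !row1 curv_delta.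
apply: S_succ_coord_gt0 (kahler_pullback hR G) k_gt0 _ => X X_frame.
rewrite -(S_k_pullback hR); apply/R_pos/unitary_frameE/mul_unitarymx; exact/unitary_frameE.
Qed.

Lemma S_pos_ge k p : (0 < k)%N -> (k <= p)%N -> S_pos R k -> S_pos R p.
Proof.
move=> k_gt0 + R_pos; elim: p => [|p IHp]; first by rewrite leqn0 (gtn_eqF k_gt0).
rewrite leq_eqVlt => /orP[/eqP<- // | ltkp].
exact: S_pos_succ (leq_trans k_gt0 ltkp) (IHp ltkp).
Qed.

Lemma S_pos_BC_pos_ge k p : S_pos R k -> (k <= p)%N -> BC_pos R p.
Proof.
move=> R_pos lekp; have [k0|k_gt0] := posnP k; first by move: R_pos; rewrite k0 => /not_S_pos0.
exact/S_pos_BC_pos/(S_pos_ge k_gt0 lekp R_pos).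
Qed.

Lemma ric_mx_hermitian k (F : 'M[C]_(k, n)) : ric_mx R F \is hermsymmx.
Proof.
apply/is_hermitianmxP; rewrite expr0 scale1r; apply/matrixP => a b.
by rewrite !mxE rmorph_sum; apply: eq_bigr => i _; rewrite /= conjC_curv.
Qed.

Lemma trace_ric_mx k p (F : 'M[C]_(k, n)) (Y : 'M[C]_(p, k)) :
  \sum_(a < p) (Y *m ric_mx R F *m Y^t*) a a =
  \sum_(a < p) \sum_(i < k) curv R (row a (Y *m F)) (row a (Y *m F)) (row i F) (row i F).
Proof.
apply: eq_bigr => a _.
transitivity (\sum_(b < k) \sum_(b' < k) Y a b * (Y a b')^* * ric_mx R F b b').
  rewrite mxE exchange_big /=; apply: eq_bigr => b' _.
  by rewrite !mxE big_distrl /=; apply: eq_bigr => b _; rewrite !mxE; ring.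
have rowE i : curv R (row a (Y *m F)) (row a (Y *m F)) (row i F) (row i F) =
   \sum_(b < k) \sum_(b' < k) Y a b * (Y a b')^* * curv R (row b F) (row b' F) (row i F) (row i F).
  rewrite row_mul curv_mulmx1; apply: eq_bigr => b _.
  by rewrite (curv_mulmx2 hR) mulr_sumr; apply: eq_bigr => b' _; rewrite !mxE; ring.
under [RHS]eq_bigr do rewrite rowE.
rewrite [RHS]exchange_big; apply: eq_bigr => b _ /=.
by rewrite [RHS]exchange_big; apply: eq_bigr => b' _ /=; rewrite mxE mulr_sumr.
Qed.

Lemma ric_lpos_sum_gt0 k l p (F : 'M[C]_(k, n)) (Y : 'M[C]_(p, k)) :
  ric_lpos R k l -> (0 < l)%N -> (l <= p)%N -> unitary_frame F -> Y \is unitarymx ->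
  0 < \sum_(a < p) \sum_(i < k) curv R (row a (Y *m F)) (row a (Y *m F)) (row i F) (row i F).
Proof.
move=> R_lpos l_gt0 lelp F_frame Y_unitary; rewrite -trace_ric_mx.
have := sum_smallest_eigs_le_trace (ric_mx_hermitian F) Y_unitary l_gt0 lelp.
have p_gt0 : (0 < p)%N := leq_trans l_gt0 lelp.
have l_pos : 0 < l%:R :> C by rewrite ltr0n.
rewrite -(pmulr_rgt0 _ l_pos); apply: lt_le_trans.
by rewrite mulr_gt0 ?ltr0n ?R_lpos.
Qed.

Lemma ric_lpos_S_pos k l : (0 < l)%N -> (l <= k)%N -> ric_lpos R k l -> S_pos R k.
Proof.
move=> l_gt0 lelk R_lpos F F_frame.
have one_unitary : (1%:M : 'M[C]_k) \is unitarymx by apply/unitarymxP; rewrite trmx1 map_mx1 mulmx1.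
by have := ric_lpos_sum_gt0 R_lpos l_gt0 lelk F_frame one_unitary; rewrite mul1mx.
Qed.

Lemma ric_lpos_BC_pos_le k l p : (0 < l)%N -> (l <= p)%N -> (p <= k)%N -> (k <= n)%N ->
  ric_lpos R k l -> BC_pos R p.
Proof.
move=> l_gt0 lelp lepk lekn R_lpos E E_frame.
pose A : 'M[C]_(k, n) := pid_mx p *m E.
have E_sub : (E <= A)%MS.
  by apply/submxP; exists (pid_mx p); rewrite mulmxA pid_mx_id // pid_mx_1 mul1mx.
have F_frame : unitary_frame (schmidt A) by apply/unitary_frameE/schmidt_unitarymx.
have [Y EY] := submxP (submx_trans E_sub (schmidt_sub A)).
have Y_unitary : Y \is unitarymx.
  apply/unitarymxP; move/unitary_frameE/unitarymxP: E_frame.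
  by rewrite EY trmx_mul map_mxM mulmxA -(mulmxA Y) (unitarymxP (schmidt_unitarymx A lekn)) mulmx1.
have := ric_lpos_sum_gt0 R_lpos l_gt0 lelp F_frame Y_unitary; rewrite -EY exchange_big /=.
under eq_bigr do under eq_bigr do rewrite (curv_sym13 hR) (curv_sym24 hR).
exact: BC_witness.
Qed.

Lemma not_ric_lpos0 k : (k <= n)%N -> ~ ric_lpos R k 0.
Proof.
move=> lekn R_lpos; pose F : 'M[C]_(k, n) := pid_mx k.
have F_frame : unitary_frame F.
  apply/unitary_frameE/unitarymxP; rewrite /F tr_pid_mx map_pid_mx.
  by rewrite pid_mx_id // pid_mx_1.
by have := R_lpos F F_frame; rewrite /sum_smallest_eigs big_ord0 ltxx.
Qed.

End Positivity.

Theorem proposition4p5 (C : numClosedFieldType) (n : nat) (R : curv_tensor C n)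
  (hR : kahler_curvature R) (k : nat) (hk : (k <= n)%N) :
  (S_pos R k -> forall p : nat, (k <= p)%N -> BC_pos R p) /\
  (forall l : nat, (l <= k)%N -> ric_lpos R k l ->
     forall p : nat, (l <= p)%N -> (p <= n)%N -> BC_pos R p).
Proof.
split; first by move=> R_pos p /(S_pos_BC_pos_ge hR R_pos).
move=> l lelk R_lpos p lelp lepn.
have [l0|l_gt0] := posnP l; first by move: R_lpos; rewrite l0 => /(not_ric_lpos0 hk).
have [lekp|ltpk] := leqP k p.
  exact: (S_pos_BC_pos_ge hR (ric_lpos_S_pos hR l_gt0 lelk R_lpos) lekp).
exact: (ric_lpos_BC_pos_le hR l_gt0 lelp (ltnW ltpk) hk R_lpos).
Qed.
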